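(* Let $\Omega\subseteq\mathbb{R}^n$ be open, let $D$ be a dense subset of $\Omega$, and let $f:D\to\mathbb{R}$ be continuous on $D$. Then (i) $F(D,\Omega,f)(x)=f(x)$ for all $x\in D$, and (ii) $F(D,\Omega,f)$ is H-continuous.
   Context: $\overline{\mathbb{R}}=\mathbb{R}\cup\{\pm\infty\}$, $\mathbb{I}\overline{\mathbb{R}}$ is the set of closed intervals $[\underline a,\overline a]$ with $\underline a\le\overline a$ in $\overline{\mathbb{R}}$, $a\in\overline{\mathbb{R}}$ identified with $[a,a]$. $\mathbb{A}(X)$ is the set of functions $X\to\mathbb{I}\overline{\mathbb{R}}$. $B_\delta(x)=\{y\in\Omega:\|x-y\|<\delta\}$. For dense $D\subseteq\Omega$ and $f\in\mathbb{A}(D)$: $I(D,\Omega,f)(x)=\sup_{\delta>0}\inf\{z\in f(y):y\in B_\delta(x)\cap D\}$, $S(D,\Omega,f)(x)=\inf_{\delta>0}\sup\{z\in f(y):y\in B_\delta(x)\cap D\}$, $F(D,\Omega,f)(x)=[I(D,\Omega,f)(x),S(D,\Omega,f)(x)]$ for $x\in\Omega$; $F(f)=F(\Omega,\Omega,f)$. A function $h\in\mathbb{A}(\Omega)$ is H-continuous if for every $g\in\mathbb{A}(\Omega)$ with $g(x)\subseteq h(x)$ for all $x\in\Omega$ one has $F(g)=h$. *)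

From HB Require Import structures.
From mathcomp Require Import all_boot all_order all_algebra.
From mathcomp Require Import all_classical all_reals all_analysis.
Set Implicit Arguments. Unset Strict Implicit. Unset Printing Implicit Defensive.
Import Order.TTheory GRing.Theory Num.Theory.
Import numFieldNormedType.Exports.
Local Open Scope classical_set_scope.
Local Open Scope ring_scope.

(* Points of R^n are row vectors 'rV[R]_n with the library (sup) norm. *)
(* An element of I(\bar R): a pair (lower, upper) of extended reals.    *)
Definition ival (R : realType) := (\bar R * \bar R)%type.

Definition is_ival (R : realType) (p : ival R) : Prop := (p.1 <= p.2)%E.

Definition in_ival (R : realType) (p : ival R) (z : \bar R) : Prop :=
  (p.1 <= z)%E /\ (z <= p.2)%E.

Definition sub_ival (R : realType) (p q : ival R) : Prop :=
  forall z, in_ival p z -> in_ival q z.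

Definition Bd (R : realType) (n : nat) (Om : set 'rV[R]_n) (x : 'rV[R]_n)
  (d : R) : set 'rV[R]_n := [set y | Om y /\ `|x - y| < d].

Definition vals (R : realType) (n : nat) (D Om : set 'rV[R]_n)
  (f : 'rV[R]_n -> ival R) (x : 'rV[R]_n) (d : R) : set (\bar R) :=
  [set z | exists y, (Bd Om x d `&` D) y /\ in_ival (f y) z].

Definition Ifun (R : realType) (n : nat) (D Om : set 'rV[R]_n)
  (f : 'rV[R]_n -> ival R) (x : 'rV[R]_n) : \bar R :=
  ereal_sup [set ereal_inf (vals D Om f x d) | d in [set d : R | 0 < d]].

Definition Sfun (R : realType) (n : nat) (D Om : set 'rV[R]_n)
  (f : 'rV[R]_n -> ival R) (x : 'rV[R]_n) : \bar R :=
  ereal_inf [set ereal_sup (vals D Om f x d) | d in [set d : R | 0 < d]].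

Definition Ffun (R : realType) (n : nat) (D Om : set 'rV[R]_n)
  (f : 'rV[R]_n -> ival R) (x : 'rV[R]_n) : ival R :=
  (Ifun D Om f x, Sfun D Om f x).

Definition Hcont (R : realType) (n : nat) (Om : set 'rV[R]_n)
  (h : 'rV[R]_n -> ival R) : Prop :=
  (forall x, Om x -> is_ival (h x)) /\
  forall g : 'rV[R]_n -> ival R,
    (forall x, Om x -> is_ival (g x)) ->
    (forall x, Om x -> sub_ival (g x) (h x)) ->
    forall x, Om x -> Ffun Om Om g x = h x.

Definition ptval (R : realType) (n : nat) (f : 'rV[R]_n -> R) :
  'rV[R]_n -> ival R := fun y => ((f y)%:E, (f y)%:E).

From HB Require Import structures.
From mathcomp Require Import all_boot all_order all_algebra.
From mathcomp Require Import all_classical all_reals all_analysis.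
Import Order.TTheory GRing.Theory Num.Theory.
Import numFieldNormedType.Exports.
Local Open Scope classical_set_scope.
Local Open Scope ring_scope.

(* The lower envelope I(D, Om, h) is lower semicontinuous: I(y) dominates the
   infimum of h over every ball B(x, d) containing y.  If g lies inside the
   envelope of a continuous f, then I(y) <= g(y) on Om and g(y) <= f(y) on D, so
   the infima of g over B(x, d) and of f over B(x, d) & D coincide for every d,
   whence I(Om, Om, g) = I(D, Om, f).  Continuity of f gives I = S = f on D and
   density of D gives I <= S.  Upper envelopes reduce to lower ones through
   S(h) = - I(-h). *)

Section Envelopes.
Context {R : realType} {n : nat}.
Implicit Types (Om D : set 'rV[R]_n) (g h : 'rV[R]_n -> ival R)
  (f : 'rV[R]_n -> R) (x y : 'rV[R]_n) (p q : ival R) (d : R).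

Lemma within_continuous_norm_lt {D f x} :
  {within D, continuous f} -> D x -> forall e : R, 0 < e ->
  exists2 d : R, 0 < d & forall y, D y -> `|x - y| < d -> `|f x - f y| < e.
Proof.
rewrite continuous_subspace_in => fc Dx e e0.
have := fc x; rewrite inE => /(_ Dx) /cvgrPdist_lt /(_ e e0).
case/(nbhs_subspace_ex _ Dx) => V /nbhs_normP [d d0 dV] EV.
exists d => // y Dy xy.
have : (V `&` D) y by split => //; exact: dV.
by rewrite -EV => -[].
Qed.

Lemma closure_norm_lt {D x} :
  closure D x -> forall d : R, 0 < d -> exists2 y, D y & `|x - y| < d.
Proof.
rewrite closureEnbhs /= meets_globallyl => xD d d0.
have [y [Dy]] := xD _ (nbhsx_ballx x _ d0).
by rewrite -ball_normE /= => xy; exists y.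
Qed.

Lemma sub_ival_bounds p q : is_ival p -> sub_ival p q ->
  (q.1 <= p.1)%E /\ (p.2 <= q.2)%E.
Proof.
by move=> p12 pq; split; [case: (pq p.1) | case: (pq p.2)] => //; split.
Qed.

Lemma vals_sub D Om h x y d d' : `|x - y| + d' <= d ->
  vals D Om h y d' `<=` vals D Om h x d.
Proof.
move=> dd' z [y' [[[Omy' yy'] Dy'] hz]]; exists y'; do 3?split => //.
apply: le_lt_trans (ler_distD y x y') _; apply: lt_le_trans dd'.
by rewrite ltrD2l.
Qed.

Lemma Ifun_ge_inf_vals D Om h {x y d} : `|x - y| < d ->
  (ereal_inf (vals D Om h x d) <= Ifun D Om h y)%E.
Proof.
rewrite -subr_gt0 => d0.
apply: le_trans (ereal_sup_ubound _) => /=; last by exists (d - `|x - y|).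
by apply: ereal_inf_le_tmp; apply: vals_sub; rewrite addrC subrK.
Qed.

Lemma Ifun_le_Sfun D Om h x : D `<=` Om -> closure D x ->
  (forall y, D y -> is_ival (h y)) -> (Ifun D Om h x <= Sfun D Om h x)%E.
Proof.
move=> DOm xD hI; apply: ge_ereal_sup => _ [d d0 <-].
apply: le_ereal_inf_tmp => _ [d' d'0 <-].
have [y Dy] : exists2 y, D y & `|x - y| < Order.min d d'.
  by apply: closure_norm_lt => //; rewrite lt_min d0 d'0.
rewrite lt_min => /andP[xyd xyd'].
have yD r : `|x - y| < r -> (Bd Om x r `&` D) y.
  by move=> xyr; do 2?split => //; exact: DOm.
apply: (@le_trans _ _ (h y).1).
  by apply: ereal_inf_lbound; exists y; split; [exact: yD | split => //; exact: hI].
by apply: ereal_sup_ubound; exists y; split; [exact: yD | split => //; exact: hI].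
Qed.

Lemma vals_ptval D Om f x d z : vals D Om (ptval f) x d z ->
  exists2 y, (Bd Om x d `&` D) y & z = (f y)%:E.
Proof. by case=> y [Hy [fz zf]]; exists y => //; apply/le_anti/andP. Qed.

Lemma Ifun_ptval D Om f x : D `<=` Om -> {within D, continuous f} -> D x ->
  Ifun D Om (ptval f) x = (f x)%:E.
Proof.
move=> DOm fc Dx; apply/le_anti/andP; split.
  apply: ge_ereal_sup => _ [d d0 <-]; apply: ereal_inf_lbound.
  by exists x; do 3?split => //; [exact: DOm | rewrite subrr normr0].
apply/lee_subgt0Pr => e e0.
have [d d0 fxd] := within_continuous_norm_lt fc Dx e e0.
have xxd : `|x - x| < d by rewrite subrr normr0.
apply: le_trans (Ifun_ge_inf_vals D Om (ptval f) xxd).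
apply: le_ereal_inf_tmp => z /vals_ptval [y [[_ xy] Dy] ->].
rewrite lee_fin lerBlDr addrC -lerBlDr.
by have /ltW := fxd y Dy xy; apply: le_trans; rewrite ler_norm.
Qed.

Definition ivalN p : ival R := (- p.2, - p.1)%E.

Lemma in_ivalN p z : in_ival (ivalN p) z <-> in_ival p (- z)%E.
Proof. by rewrite /in_ival /= leeNl leeNr; split=> -[]. Qed.

Lemma vals_ivalN D Om h x d :
  vals D Om (ivalN \o h) x d = -%E @` vals D Om h x d.
Proof.
apply/seteqP; split => [z [y [Hy /in_ivalN hz]] | _ [z [y [Hy hz]] <-]].
  by exists (- z)%E; [exists y | rewrite oppeK].
by exists y; split => //; apply/in_ivalN; rewrite oppeK.
Qed.

Lemma SfunE D Om h x : Sfun D Om h x = (- Ifun D Om (ivalN \o h) x)%E.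
Proof.
rewrite /Ifun (_ : [set _ | d in _] = -%E @` [set ereal_sup (vals D Om h x d)
    | d in [set d | 0 < d]]) ?ereal_supN ?oppeK // image_comp.
by apply: eq_imagel => d _ /=; rewrite vals_ivalN ereal_infN.
Qed.

Lemma Sfun_ptval D Om f x : D `<=` Om -> {within D, continuous f} -> D x ->
  Sfun D Om (ptval f) x = (f x)%:E.
Proof.
move=> DOm fc Dx; rewrite SfunE (_ : ivalN \o _ = ptval (fun y => - f y)).
  rewrite Ifun_ptval ?EFinN ?oppeK // => y; exact: (continuousN (fc y)).
by apply/funext => y; rewrite /ptval /ivalN /= EFinN.
Qed.

Lemma Ifun_squeeze D Om g h x :
  (forall y, Om y -> is_ival (g y)) ->
  (forall y, D y -> ((g y).1 <= (h y).1)%E) ->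
  (forall y, Om y -> (Ifun D Om h y <= (g y).1)%E) ->
  Ifun Om Om g x = Ifun D Om h x.
Proof.
move=> gI gh Ig; rewrite /Ifun; congr ereal_sup; apply: eq_imagel => d _.
apply/le_anti/andP; split.
  apply: le_ereal_inf_tmp => z [y [[[Omy xy] Dy] [hz _]]].
  apply: ge_ereal_inf; exists (g y).1; last exact: le_trans (gh y Dy) hz.
  by exists y; do 3?split => //; exact: gI.
apply: le_ereal_inf_tmp => z [y [[[Omy xy] _] [gz _]]].
by apply: le_trans gz; apply: le_trans (Ig y Omy); exact: Ifun_ge_inf_vals.
Qed.

Lemma Sfun_squeeze D Om g h x :
  (forall y, Om y -> is_ival (g y)) ->
  (forall y, D y -> ((h y).2 <= (g y).2)%E) ->
  (forall y, Om y -> ((g y).2 <= Sfun D Om h y)%E) ->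
  Sfun Om Om g x = Sfun D Om h x.
Proof.
move=> gI hg gS; rewrite !SfunE; congr (- _)%E.
apply: Ifun_squeeze => y /=.
- by rewrite /is_ival leeN2; exact: gI.
- by rewrite leeN2; exact: hg.
- by rewrite leeNr -SfunE; exact: gS.
Qed.

Lemma Ffun_ptval D Om f x : D `<=` Om -> {within D, continuous f} -> D x ->
  Ffun D Om (ptval f) x = ((f x)%:E, (f x)%:E).
Proof. by move=> DOm fc Dx; rewrite /Ffun Ifun_ptval ?Sfun_ptval. Qed.

Lemma Hcont_Ffun_ptval D Om f : D `<=` Om -> Om `<=` closure D ->
  {within D, continuous f} -> Hcont Om (Ffun D Om (ptval f)).
Proof.
move=> DOm OmD fc; split=> [x Omx | g gI gF x Omx].
  by apply: Ifun_le_Sfun => //; [exact: OmD | move=> y _; exact: lexx].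
have gFb y : Om y -> (Ifun D Om (ptval f) y <= (g y).1)%E /\
    ((g y).2 <= Sfun D Om (ptval f) y)%E.
  by move=> Omy; exact: sub_ival_bounds (gI y Omy) (gF y Omy).
have gD y : D y -> ((g y).1 <= (f y)%:E)%E /\ ((f y)%:E <= (g y).2)%E.
  move=> Dy; have [] := gFb y (DOm y Dy); have := gI y (DOm y Dy).
  rewrite /is_ival Ifun_ptval ?Sfun_ptval // => g12 fg1 g2f.
  by split; [exact: le_trans g12 g2f | exact: le_trans fg1 g12].
rewrite /Ffun; congr pair.
- by apply: Ifun_squeeze => // y; [case/gD | case/gFb].
- by apply: Sfun_squeeze => // y; [case/gD | case/gFb].
Qed.

End Envelopes.

Theorem theorem7 (R : realType) (n : nat) (Om D : set 'rV[R]_n)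
  (f : 'rV[R]_n -> R) :
  open Om -> D `<=` Om -> Om `<=` closure D ->
  {within D, continuous f} ->
  (forall x, D x -> Ffun D Om (ptval f) x = ((f x)%:E, (f x)%:E)) /\
  Hcont Om (Ffun D Om (ptval f)).
Proof.
move=> _ DOm OmD fc; split; first by move=> x; exact: Ffun_ptval.
exact: Hcont_Ffun_ptval.
Qed.
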